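(* Let $(W,V)$ be an independent-type $\mathcal Y$-valued transition matrix on $\mathcal X$ with $W$ irreducible and invertible, and let $P$ be a distribution on $\mathcal X$. Then $$\mathcal L^I_{2,W,V}=\big\{([W,A],0)\in\mathcal G^I:\ A\in M_d(\mathbb R),\ A^Tu_{\mathcal X}=0,\ [I_{S(V)_x},A]=0\ \forall x\in\mathcal X\big\},$$ $$\mathcal L^I_{2,P,W,V}=\big\{([W,A],0)\in\mathcal G^I:\ A\in M_d(\mathbb R),\ A^Tu_{\mathcal X}=0,\ AP=0,\ [I_{S(V)_x},A]=0\ \forall x\in\mathcal X\big\},$$ where $0$ denotes the tuple $C$ with all $C_y=0$ and $[X,Y]=XY-YX$.
   Context: Let $\mathcal X=\{1,\dots,d\}$, $\mathcal Y=\{1,\dots,d_Y\}$, $u_{\mathcal X}\in\mathbb R^{\mathcal X}$ the all-ones vector. An independent-type $\mathcal Y$-valued transition matrix $(W,V)$ consists of a column-stochastic $d\times d$ matrix $W(x|x')$ and a transition matrix $V$ from $\mathcal X$ to $\mathcal Y$ ($V(y|x')\ge0$, $\sum_yV(y|x')=1$), defining $W_y:=WD(V_y)$, where $V_y\in\mathbb R^{\mathcal X}$, $V_y(x')=V(y|x')$, and $D(v)$ is the diagonal matrix with diagonal $v$. For $x\in\mathcal X$, $V_{*,x}\in\mathbb R^{\mathcal Y}$ is $V_{*,x}(y)=V(y|x)$, $S(V)_x:=\{x'\in\mathcal X: V_{*,x'}=V_{*,x}\}$, and $I_S$ is the diagonal $0/1$ matrix projecting onto the coordinates in $S$. $\mathcal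 G^I$ is the set of pairs $(B,C)$ with $B$ a real $d\times d$ matrix vanishing wherever $W(x|x')=0$ and $C=(C_y)_{y\in\mathcal Y}$, $C_y\in\mathbb R^{\mathcal X}$, $C_y(x')=0$ wherever $V(y|x')=0$. $\mathcal L^I_{1,W,V}:=\{(B,C)\in\mathcal G^I: B^Tu_{\mathcal X}=0,\ \sum_yC_y=0\}$. Let $\mathcal L_2:=\{(W_yA-AW_y)_{y\in\mathcal Y}: A\in M_d(\mathbb R),\ A^Tu_{\mathcal X}=0\}$ and $\mathcal L_{2,P}:=\{(W_yA-AW_y)_{y}: A^Tu_{\mathcal X}=0,\ AP=0\}$. Then $\mathcal L^I_{2,W,V}:=\{(B,C)\in\mathcal L^I_{1,W,V}: (BD(V_y)+WD(C_y))_{y}\in\mathcal L_2\}$ and $\mathcal L^I_{2,P,W,V}:=\{(B,C)\in\mathcal L^I_{1,W,V}:(BD(V_y)+WD(C_y))_y\in\mathcal L_{2,P}\}$. *)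

From HB Require Import structures.
From mathcomp Require Import all_boot all_order all_algebra.
Set Implicit Arguments. Unset Strict Implicit. Unset Printing Implicit Defensive.
Import Order.TTheory GRing.Theory Num.Theory.
Local Open Scope ring_scope.

Section Defs.
Variable R : realFieldType.
Variables d dY : nat.
(* X = 'I_d, Y = 'I_dY.  W x x' = W(x|x'),  V y x' = V(y|x'),  C y x' = C_y(x'). *)

Definition column_stochastic (W : 'M[R]_d) : Prop :=
  (forall x x', 0 <= W x x') /\ (forall x', \sum_(x < d) W x x' = 1).

Definition transition_XY (V : 'M[R]_(dY, d)) : Prop :=
  (forall y x', 0 <= V y x') /\ (forall x', \sum_(y < dY) V y x' = 1).

Definition irreducible (W : 'M[R]_d) : Prop :=
  forall x x', exists k : nat, 0 < (W ^+ k) x x'.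

Definition distribution (P : 'cV[R]_d) : Prop :=
  (forall x, 0 <= P x 0) /\ \sum_(x < d) P x 0 = 1.

Definition uX : 'cV[R]_d := const_mx 1.

Definition Dg (v : 'rV[R]_d) : 'M[R]_d := diag_mx v.

Definition Wy (W : 'M[R]_d) (V : 'M[R]_(dY, d)) (y : 'I_dY) : 'M[R]_d :=
  W *m Dg (row y V).

Definition comm (X Y : 'M[R]_d) : 'M[R]_d := X *m Y - Y *m X.

Definition SV (V : 'M[R]_(dY, d)) (x : 'I_d) : {set 'I_d} :=
  [set x' | col x' V == col x V].

Definition Iproj (S : {set 'I_d}) : 'M[R]_d :=
  diag_mx (\row_(i < d) (if i \in S then 1 else 0)).

Definition inGI (W : 'M[R]_d) (V : 'M[R]_(dY, d))
  (B : 'M[R]_d) (C : 'M[R]_(dY, d)) : Prop :=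
  (forall x x', W x x' = 0 -> B x x' = 0) /\
  (forall y x', V y x' = 0 -> C y x' = 0).

Definition inL1 W V B C : Prop :=
  inGI W V B C /\ B^T *m uX = 0 /\ \sum_(y < dY) row y C = 0.

Definition inL2 W V (F : 'I_dY -> 'M[R]_d) : Prop :=
  exists A : 'M[R]_d, A^T *m uX = 0 /\
    forall y, F y = Wy W V y *m A - A *m Wy W V y.

Definition inL2P (P : 'cV[R]_d) W V (F : 'I_dY -> 'M[R]_d) : Prop :=
  exists A : 'M[R]_d, A^T *m uX = 0 /\ A *m P = 0 /\
    forall y, F y = Wy W V y *m A - A *m Wy W V y.

Definition fam W V (B : 'M[R]_d) (C : 'M[R]_(dY, d)) (y : 'I_dY) : 'M[R]_d :=
  B *m Dg (row y V) + W *m Dg (row y C).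

Definition inL2I W V B C : Prop := inL1 W V B C /\ inL2 W V (fam W V B C).
Definition inL2PI P W V B C : Prop := inL1 W V B C /\ inL2P P W V (fam W V B C).

End Defs.

From HB Require Import structures.
From mathcomp Require Import all_boot all_order all_algebra.
Import Order.TTheory GRing.Theory Num.Theory.
Set Implicit Arguments. Unset Strict Implicit. Unset Printing Implicit Defensive.
Local Open Scope ring_scope.

(* Summing the defining identities B D(V_y) + W D(C_y) = [W D(V_y), A] over y
   uses sum_y D(V_y) = 1 and sum_y C_y = 0 to give B = [W, A].  Substituting
   back and cancelling the invertible W leaves D(C_y) = [D(V_y), A]; the
   commutator of a diagonal matrix has zero diagonal, so C_y = 0 and A commutes
   with every D(V_y).  This says A_ij = 0 whenever the columns i and j of V
   differ, which is also what commuting with every I_{S(V)_x} says. *)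

Section DiagonalCommutator.
Variables (R : realFieldType) (n : nat).
Implicit Types (A : 'M[R]_n) (v w : 'rV[R]_n).

Lemma comm_diag_mxE v A i j : comm (diag_mx v) A i j = (v 0 i - v 0 j) * A i j.
Proof. by rewrite /comm mul_diag_mx mul_mx_diag !mxE mulrBl [A i j * _]mulrC. Qed.

Lemma diag_mx_eq_comm v w A : diag_mx w = comm (diag_mx v) A -> w = 0.
Proof.
move/matrixP=> E; apply/rowP=> j; have := E j j.
by rewrite comm_diag_mxE subrr mul0r !mxE eqxx mulr1n.
Qed.

Lemma comm_diag_mx_eq0P v A :
  comm (diag_mx v) A = 0 <-> forall i j, v 0 i != v 0 j -> A i j = 0.
Proof.
split=> [/matrixP E i j ne | E].
  by have /eqP := E i j; rewrite comm_diag_mxE mxE mulf_eq0 subr_eq0 (negbTE ne) => /eqP.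
apply/matrixP=> i j; rewrite comm_diag_mxE mxE.
by have [->|ne] := eqVneq (v 0 i) (v 0 j); rewrite ?subrr ?mul0r ?E ?mulr0.
Qed.

End DiagonalCommutator.

Lemma stochastic_trmx_uX (R : realFieldType) d (W : 'M[R]_d) :
  column_stochastic W -> W^T *m uX R d = uX R d.
Proof.
move=> [_ sumW]; apply/matrixP=> i k; rewrite !mxE -(sumW i).
by apply: eq_bigr => j _; rewrite !mxE mulr1.
Qed.

Section ColumnBlocks.
Variables (R : realFieldType) (d dY : nat) (V : 'M[R]_(dY, d)).
Implicit Types (A B : 'M[R]_d) (C : 'M[R]_(dY, d)).

Definition col_block_diagonal A := forall i j, col i V != col j V -> A i j = 0.

Lemma comm_Dg_rowsP A :
  (forall y, comm (Dg (row y V)) A = 0) <-> col_block_diagonal A.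
Proof.
split=> [E i j | E y].
  have {}E y i' j' : V y i' != V y j' -> A i' j' = 0.
    by have := (comm_diag_mx_eq0P (row y V) A).1 (E y) i' j'; rewrite !mxE.
  apply: contraNeq => nzA; apply/eqP/matrixP=> y k; rewrite !mxE.
  by apply: contraNeq nzA => /E ->.
apply/comm_diag_mx_eq0P=> i j; rewrite !mxE => ne; apply: E.
by apply: contraNneq ne => /matrixP/(_ y 0); rewrite !mxE => ->.
Qed.

Lemma comm_Iproj_SVP A :
  (forall x, comm (Iproj R (SV V x)) A = 0) <-> col_block_diagonal A.
Proof.
split=> [E i j ne | E x].
  have := (comm_diag_mx_eq0P _ A).1 (E i) i j; apply.
  by rewrite !mxE !inE eqxx [col j V == _]eq_sym (negbTE ne) oner_neq0.
apply/comm_diag_mx_eq0P=> i j; rewrite !mxE !inE => ne; apply: E.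
by apply: contraNneq ne => ->.
Qed.

Lemma sum_Dg_rows : transition_XY V -> \sum_(y < dY) Dg (row y V) = 1%:M.
Proof.
move=> [_ sumV]; rewrite /Dg -raddf_sum -diag_const_mx; congr diag_mx.
by apply/rowP=> x; rewrite summxE !mxE -(sumV x); apply: eq_bigr => y _; rewrite mxE.
Qed.

Section Family.
Variable W : 'M[R]_d.
Hypotheses (HV : transition_XY V) (W_unit : W \in unitmx) (HW : column_stochastic W).

Lemma fam_commP A B C : \sum_(y < dY) row y C = 0 ->
  (forall y, fam W V B C y = Wy W V y *m A - A *m Wy W V y) <->
  [/\ C = 0, B = comm W A & col_block_diagonal A].
Proof.
move=> sumC; split=> [E | [-> -> /comm_Dg_rowsP AD] y]; last first.
  have /eqP := AD y; rewrite subr_eq0 => /eqP DA.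
  by rewrite /fam /Wy /comm row0 /Dg linear0 mulmx0 addr0 mulmxBl -!mulmxA -/(Dg _) DA.
have EB : B = comm W A.
  have : \sum_(y < dY) fam W V B C y = \sum_(y < dY) (Wy W V y *m A - A *m Wy W V y).
    by apply: eq_bigr => y _; exact: E.
  rewrite /fam /Wy big_split sumrB /= -!mulmx_sumr -mulmx_suml -mulmx_sumr.
  by rewrite sum_Dg_rows // /Dg -raddf_sum sumC raddf0 mulmx0 addr0 !mulmx1.
have DC y : Dg (row y C) = comm (Dg (row y V)) A.
  apply: (can_inj (mulKmx W_unit)); move: (E y).
  rewrite /fam /Wy EB /comm mulmxBl mulmxBr !mulmxA => /(canRL (addKr _)).
  by rewrite opprB addrC addrA subrK => ->.
have C0 : C = 0 by apply/row_matrixP=> y; rewrite row0; exact: diag_mx_eq_comm (DC y).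
by split=> //; apply/comm_Dg_rowsP=> y; rewrite -DC C0 row0 /Dg linear0.
Qed.

Lemma inL1_famP A B C : A^T *m uX R d = 0 ->
  inL1 W V B C /\ (forall y, fam W V B C y = Wy W V y *m A - A *m Wy W V y) <->
  inGI W V B C /\ C = 0 /\ (forall x, comm (Iproj R (SV V x)) A = 0) /\ B = comm W A.
Proof.
move=> A_u; split=> [[[GI [_ sumC]] /(fam_commP _ _ sumC) [C0 EB /comm_Iproj_SVP]] //|].
move=> [GI [C0 [/comm_Iproj_SVP AD EB]]].
have sumC : \sum_(y < dY) row y C = 0 by rewrite C0; apply: big1 => y _; rewrite row0.
split; last exact/(fam_commP _ _ sumC).
do 2 split=> //.
rewrite EB /comm linearB /= !trmx_mul mulmxBl -!mulmxA stochastic_trmx_uX //.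
by rewrite A_u mulmx0 subrr.
Qed.

End Family.
End ColumnBlocks.

Theorem corollary2 (R : realFieldType) (d dY : nat)
  (W : 'M[R]_d) (V : 'M[R]_(dY, d)) (P : 'cV[R]_d)
  (HW : column_stochastic W) (HV : transition_XY V)
  (Hirr : irreducible W) (Hinv : W \in unitmx)
  (HP : distribution P) :
  (forall (B : 'M[R]_d) (C : 'M[R]_(dY, d)),
     inL2I W V B C <->
     (inGI W V B C /\ C = 0 /\
      exists A : 'M[R]_d, A^T *m @uX R d = 0 /\
        (forall x, comm (@Iproj R d (SV V x)) A = 0) /\ B = comm W A))
  /\
  (forall (B : 'M[R]_d) (C : 'M[R]_(dY, d)),
     inL2PI P W V B C <->
     (inGI W V B C /\ C = 0 /\
      exists A : 'M[R]_d, A^T *m @uX R d = 0 /\ A *m P = 0 /\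
        (forall x, comm (@Iproj R d (SV V x)) A = 0) /\ B = comm W A)).
Proof.
have famP := inL1_famP HV Hinv HW.
split=> B C; split.
- move=> [L1 [A [A_u F]]]; have [GI [C0 [AI EB]]] := (famP A B C A_u).1 (conj L1 F).
  by do 2 split=> //; exists A.
- move=> [GI [C0 [A [A_u [AI EB]]]]].
  have [L1 F] := (famP A B C A_u).2 (conj GI (conj C0 (conj AI EB))).
  by split=> //; exists A.
- move=> [L1 [A [A_u [AP F]]]]; have [GI [C0 [AI EB]]] := (famP A B C A_u).1 (conj L1 F).
  by do 2 split=> //; exists A.
- move=> [GI [C0 [A [A_u [AP [AI EB]]]]]].
  have [L1 F] := (famP A B C A_u).2 (conj GI (conj C0 (conj AI EB))).
  by split=> //; exists A.
Qed.
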